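(* In the curved-exam game described in the context, let $\hat\alpha_n:=n\big(1-(\sum_{i=1}^n\frac1{n-\alpha_i})^{-1}\big)$, $\bar x^*:=1-\frac{nm}{n-1}\big(\frac1{\hat\alpha_n}-1\big)$, and $x_i^*:=\frac{(n-1)\alpha_i-n(1-\alpha_i)(m-\bar x^* )}{n-\alpha_i}$ for $i=1,\dots,n$. Then the profile $x^*=(x_1^*,\dots,x_n^* )$ is a curved interior pure Nash equilibrium (all $x_i^*>0$) if and only if $$\max_{1\le i\le n}\Big\{(n-\alpha_i)\Big(\frac{nm}{n-1}-J_i\Big)-\alpha_i\Big\}\ \le\ n(m-\bar x^* )\ <\ \frac{(n-1)\alpha_{(1)}}{1-\alpha_{(1)}},$$ where $\alpha_{(1)}:=\min_{1\le i\le n}\alpha_i$.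
   Context: The curved-exam game: fix $n\ge2$, abilities $\alpha_1,\dots,\alpha_n\in(0,1)$, target mean $m\in(0,1)$. Student $i$ chooses $x_i\in[0,1]$; $\bar x=\frac1n\sum_j x_j$, $\bar x_{-i}=\frac1{n-1}\sum_{j\ne i}x_j$. Grade $G_i(x)=x_i+\max(m-\bar x,0)$ (not truncated at 1); payoff $U_i(x)=G_i(x)^{\alpha_i}(1-x_i)^{1-\alpha_i}$. For each $i$, $J_i$ denotes the unique zero in $\big[\frac{nm-\alpha_i}{n-1},\frac{nm}{n-1}-\frac{\alpha_i}{n-\alpha_i}\big]$ of the strictly decreasing function $\phi_i(z)=\big(m+\frac{n-1}{n}(1-z)\big)^{\alpha_i}\big(1+\frac{nm}{n-1}-z\big)^{1-\alpha_i}-1$. *)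

From mathcomp Require Import all_boot all_order all_algebra.
From mathcomp Require Import reals exp.
Set Implicit Arguments. Unset Strict Implicit. Unset Printing Implicit Defensive.
Import Order.TTheory GRing.Theory Num.Theory.
Local Open Scope ring_scope.

Section CurvedExam.
Variables (R : realType) (n : nat).

Definition xbar (x : 'I_n -> R) : R := (\sum_(j < n) x j) / n%:R.

Definition grade (m : R) (x : 'I_n -> R) (i : 'I_n) : R :=
  x i + Num.max (m - xbar x) 0.

Definition payoff (a : 'I_n -> R) (m : R) (x : 'I_n -> R) (i : 'I_n) : R :=
  (grade m x i) `^ (a i) * (1 - x i) `^ (1 - a i).

Definition upd (x : 'I_n -> R) (i : 'I_n) (y : R) : 'I_n -> R :=
  fun j => if j == i then y else x j.

Definition is_profile (x : 'I_n -> R) : Prop := forall i, 0 <= x i <= 1.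

Definition is_pure_NE (a : 'I_n -> R) (m : R) (x : 'I_n -> R) : Prop :=
  is_profile x /\
  forall (i : 'I_n) (y : R), 0 <= y <= 1 -> payoff a m (upd x i y) i <= payoff a m x i.

(* curved (the curve is active: \bar x < m) interior (all x_i > 0) pure NE *)
Definition curved_interior_pure_NE (a : 'I_n -> R) (m : R) (x : 'I_n -> R) : Prop :=
  is_pure_NE a m x /\ (forall i, 0 < x i) /\ xbar x < m.

Definition phi (m ai z : R) : R :=
  (m + (n%:R - 1) / n%:R * (1 - z)) `^ ai *
  (1 + n%:R * m / (n%:R - 1) - z) `^ (1 - ai) - 1.

Definition alpha_hat (a : 'I_n -> R) : R :=
  n%:R * (1 - (\sum_(i < n) (n%:R - a i)^-1)^-1).

Definition xbar_star (a : 'I_n -> R) (m : R) : R :=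
  1 - n%:R * m / (n%:R - 1) * ((alpha_hat a)^-1 - 1).

Definition x_star (a : 'I_n -> R) (m : R) (i : 'I_n) : R :=
  ((n%:R - 1) * a i - n%:R * (1 - a i) * (m - xbar_star a m)) / (n%:R - a i).

End CurvedExam.

Definition maxs {R : realType} (s : seq R) : R := foldr Num.max (head 0 s) s.
Definition mins {R : realType} (s : seq R) : R := foldr Num.min (head 0 s) s.

From mathcomp Require Import all_boot all_order all_algebra.
From mathcomp Require Import reals exp ring lra.
Set Implicit Arguments. Unset Strict Implicit. Unset Printing Implicit Defensive.
Import Order.TTheory GRing.Theory Num.Theory.
Local Open Scope ring_scope.

(* With the curve active at gap D = m - xbar > 0, a deviation y of player i
   pays (y + max(D - (y - x_i)/n, 0))^a (1 - y)^(1-a).  While the curve stays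
   active, weighted AM-GM shows that x_i*, the solution of the first-order
   condition, is optimal, with value a^a (1-a)^(1-a) ((n-1)/n)^a K where
   K = n (1 + D)/(n - a); once the curve is off, the payoff is at most
   a^a (1-a)^(1-a), attained at y = a.  So x* is an equilibrium iff
   ((n-1)/n)^a K >= 1 for every player, and phi_i(J_i) = 0 reads
   ((n-1)/n)^a (1 + nm/(n-1) - J_i) = 1, which turns this into the left
   inequality.  The right one is the positivity of the x_i*, the least able
   player being the binding one.  The strict Bernoulli inequality
   ((n-1)/n)^a < 1 - a/n makes every threshold positive, so the left
   inequality already forces the curve to be active. *)

Section WeightedAMGM.
Variables (R : realType) (t : R).
Hypothesis t01 : 0 < t < 1.

Lemma ln_lt_subr1 (u : R) : 0 < u -> u != 1 -> ln u < u - 1.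
Proof.
move=> u0 u1; have /expR_gt1Dx : ln u != 0 by rewrite ln_eq0.
by rewrite lnK ?posrE //; lra.
Qed.

Lemma ln_le_subr1 (u : R) : 0 < u -> ln u <= u - 1.
Proof.
move=> u0; have [->|u1] := eqVneq u 1; first by rewrite ln1 subrr.
exact/ltW/ln_lt_subr1.
Qed.

Lemma powRD_onem (x : R) : 0 <= x -> x `^ t * x `^ (1 - t) = x.
Proof. by move=> x0; rewrite -powRD ?subrKC ?powRr1 // oner_eq0. Qed.

Lemma powR_mul_scale (u v k : R) : 0 <= u -> 0 <= v -> 0 <= k ->
  (u * k) `^ t * (v * k) `^ (1 - t) = u `^ t * v `^ (1 - t) * k.
Proof.
by move=> u0 v0 k0; rewrite !powRM // mulrACA powRD_onem.
Qed.

Lemma powR_amgm (x y : R) : 0 <= x -> 0 <= y ->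
  x `^ t * y `^ (1 - t) <= t * x + (1 - t) * y.
Proof.
case/andP: t01 => t0 t1 x0 y0.
have t'0 : 0 < 1 - t by lra.
have /(conjugate_powR (powR_ge0 x t) (powR_ge0 y (1 - t))) :
    t^-1^-1 + (1 - t)^-1^-1 = 1 by rewrite !invrK; lra.
rewrite !invr_gt0 => /(_ t0 t'0).
by rewrite -!powRrM !mulfV ?gt_eqF // !powRr1 // !invrK ![_ * t]mulrC ![_ * (1 - t)]mulrC.
Qed.

Lemma powR_amgm_lt (x y : R) : 0 < x -> 0 < y -> x != y ->
  x `^ t * y `^ (1 - t) < t * x + (1 - t) * y.
Proof.
case/andP: t01 => t0 t1 x0 y0 xy.
set L := t * x + (1 - t) * y.
have L0 : 0 < L by rewrite /L; nra.
have xL : x / L != 1.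
  apply: contra xy => /eqP/divr1_eq xL; apply/eqP.
  have : (1 - t) * (x - y) = 0 by move: xL; rewrite /L; lra.
  by move/eqP; rewrite mulf_eq0 subr_eq0 => /orP[/eqP|/eqP //]; lra.
have := ln_lt_subr1 (divr_gt0 x0 L0) xL.
have := ln_le_subr1 (divr_gt0 y0 L0).
rewrite !ln_div ?posrE // => hy hx.
have avg : t * (x / L - 1) + (1 - t) * (y / L - 1) = 0.
  by rewrite /L; field; exact: lt0r_neq0.
rewrite /powR !gt_eqF // -expRD -[ltRHS]lnK ?posrE // ltr_expR; nra.
Qed.

Lemma powR_amgm_scaled (p q P Q : R) : 0 <= p -> 0 <= q -> 0 < P -> 0 < Q ->
  p `^ t * q `^ (1 - t) <=
  (t * (p / P) + (1 - t) * (q / Q)) * (P `^ t * Q `^ (1 - t)).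
Proof.
move=> p0 q0 P0 Q0.
have scale (u U s : R) : 0 <= u -> 0 < U -> u `^ s = (u / U) `^ s * U `^ s.
  by move=> u0 U0; rewrite -powRM ?divfK ?divr_ge0 // ?gt_eqF // ltW.
rewrite (scale p P) // (scale q Q) // mulrACA ler_wpM2r ?mulr_ge0 ?powR_ge0 //.
by apply: powR_amgm; apply: divr_ge0; rewrite // ltW.
Qed.

Lemma bernoulli_likelihood_le (y : R) : 0 <= y <= 1 ->
  y `^ t * (1 - y) `^ (1 - t) <= t `^ t * (1 - t) `^ (1 - t).
Proof.
case/andP: t01 => t0 t1 /andP[y0 y1].
apply: le_trans (powR_amgm_scaled (q := 1 - y) (Q := 1 - t) y0 _ t0 _) _;
  rewrite ?subr_ge0 ?subr_gt0 //.
have -> : t * (y / t) + (1 - t) * ((1 - y) / (1 - t)) = 1.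
  by field; rewrite !gt_eqF ?subr_gt0.
by rewrite mul1r.
Qed.

End WeightedAMGM.

Section Deviation.
Variables (R : realType) (n : nat).
Local Notation N := (n%:R : R).

Definition curved_best_response (al D : R) : R :=
  ((N - 1) * al - N * (1 - al) * D) / (N - al).

Definition deviation_payoff (al D xi y : R) : R :=
  (y + Num.max (D - (y - xi) / N) 0) `^ al * (1 - y) `^ (1 - al).

Definition deviation_threshold (al m J : R) : R :=
  (N - al) * (N * m / (N - 1) - J) - al.

Hypothesis n2 : (2 <= n)%N.
Variable al : R.
Hypothesis al01 : 0 < al < 1.

Let N_ge2 : 2 <= N. Proof. by rewrite (ler_nat R 2 n). Qed.
Let N_gt0 : 0 < N. Proof. exact: lt_le_trans N_ge2. Qed.
Let N_gt_al : 0 < N - al. Proof. by case/andP: al01 => _ al1; have := N_ge2; lra. Qed.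

Lemma curved_best_response_gt0 (D : R) :
  (0 < curved_best_response al D) = (N * D * (1 - al) < (N - 1) * al).
Proof. by rewrite ltr_pdivlMr // mul0r subr_gt0 mulrAC. Qed.

Lemma curved_best_response_le1 (D : R) : 0 <= D -> curved_best_response al D <= 1.
Proof.
case/andP: al01 => al0 al1 D0; rewrite ler_pdivrMr // mul1r.
have : 0 <= N * (1 - al) * D by rewrite !mulr_ge0 // subr_ge0 ltW.
have := N_ge2; nra.
Qed.

Lemma phi_eq0E (m J : R) : J <= N * m / (N - 1) -> phi n m al J = 0 ->
  ((N - 1) / N) `^ al * (1 + N * m / (N - 1) - J) = 1.
Proof.
have N2 := N_ge2; move=> Jhi phi0; apply/eqP; rewrite -subr_eq0 -phi0 /phi.
have -> : m + (N - 1) / N * (1 - J) = (N - 1) / N * (1 + N * m / (N - 1) - J).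
  by field; rewrite !gt_eqF //; lra.
set c := (N - 1) / N; set KJ := 1 + _ - J.
have c0 : 0 <= c by rewrite divr_ge0 //; lra.
have KJ0 : 0 <= KJ by rewrite /KJ; lra.
by rewrite powRM // -mulrA powRD_onem.
Qed.

Lemma deviation_threshold_gt0 (m J : R) :
  J <= N * m / (N - 1) -> phi n m al J = 0 -> 0 < deviation_threshold al m J.
Proof.
have N2 := N_ge2; move=> Jhi /(phi_eq0E Jhi); set KJ := 1 + _ - J => hKJ.
have KJ1 : 1 <= KJ by rewrite /KJ; lra.
have N1 : 0 < (N - 1) / N by rewrite divr_gt0 //; lra.
have bernoulli : ((N - 1) / N) `^ al < 1 - al / N.
  have neq1 : (N - 1) / N != 1 by rewrite lt_eqF // ltr_pdivrMr; lra.
  have := powR_amgm_lt al01 N1 ltr01 neq1.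
  have -> : al * ((N - 1) / N) + (1 - al) * 1 = 1 - al / N.
    by field; rewrite gt_eqF //; lra.
  by rewrite powR1 mulr1.
have : 1 < (1 - al / N) * KJ by rewrite -{1}hKJ ltr_pM2r //; lra.
have -> : (1 - al / N) * KJ = (N - al) * KJ / N by field; rewrite gt_eqF //; lra.
rewrite ltr_pdivlMr ?mul1r /deviation_threshold; last lra.
have -> : N * m / (N - 1) - J = KJ - 1 by rewrite /KJ; ring.
nra.
Qed.

Variable D : R.
Hypothesis D0 : 0 <= D.
Local Notation xi := (curved_best_response al D).
Local Notation K := (N * (1 + D) / (N - al)).

Lemma curved_best_response_addD : xi + D = al * ((N - 1) / N * K).
Proof. by rewrite /curved_best_response; field; rewrite !gt_eqF. Qed.

Lemma onem_curved_best_response : 1 - xi = (1 - al) * K.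
Proof. by rewrite /curved_best_response; field; rewrite gt_eqF. Qed.

Lemma deviation_payoff_at_best :
  deviation_payoff al D xi xi =
  al `^ al * (1 - al) `^ (1 - al) * (((N - 1) / N) `^ al * K).
Proof.
have N2 := N_ge2.
have K0 : 0 <= K by rewrite divr_ge0 ?(ltW N_gt_al) ?mulr_ge0 ?ler0n ?addr_ge0.
have c0 : 0 <= (N - 1) / N by rewrite divr_ge0 //; lra.
case/andP: al01 => al0 al1.
rewrite /deviation_payoff subrr mul0r subr0 max_l //.
rewrite curved_best_response_addD onem_curved_best_response.
have onem0 : 0 <= 1 - al by rewrite subr_ge0 ltW.
have ac0 : 0 <= al * ((N - 1) / N) by rewrite mulr_ge0 // ltW.
by rewrite mulrA powR_mul_scale // powRM ?(ltW al0) //; ring.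
Qed.

Lemma deviation_payoff_curved_le (y : R) : 0 <= y <= 1 ->
  0 <= D - (y - xi) / N -> deviation_payoff al D xi y <= deviation_payoff al D xi xi.
Proof.
have N2 := N_ge2; case/andP: (al01) => al0 al1 /andP[y0 y1] curved.
have D1 : 0 < 1 + D by have := D0; lra.
have N1 : 0 < N - 1 by lra.
have K0 : 0 < K by rewrite divr_gt0 // mulr_gt0.
have c0 : 0 < (N - 1) / N by rewrite divr_gt0.
have P0 : 0 < xi + D by rewrite curved_best_response_addD mulr_gt0 // mulr_gt0.
have Q0 : 0 < 1 - xi by rewrite onem_curved_best_response mulr_gt0 // subr_gt0.
rewrite /deviation_payoff !max_l ?subrr ?mul0r ?subr0 //.
apply: le_trans (powR_amgm_scaled al01 _ _ P0 Q0) _; [lra | lra |].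
have -> : y + (D - (y - xi) / N) = xi + D + (N - 1) / N * (y - xi).
  by field; rewrite gt_eqF.
have -> : 1 - y = 1 - xi - (y - xi) by ring.
set z := y - xi.
suff -> : al * ((xi + D + (N - 1) / N * z) / (xi + D)) +
          (1 - al) * ((1 - xi - z) / (1 - xi)) = 1 by rewrite mul1r.
rewrite curved_best_response_addD onem_curved_best_response.
by field; rewrite !gt_eqF // subr_gt0.
Qed.

Lemma no_profitable_deviationP :
  (forall y, 0 <= y <= 1 -> deviation_payoff al D xi y <= deviation_payoff al D xi xi)
  <-> 1 <= ((N - 1) / N) `^ al * K.
Proof.
case/andP: (al01) => al0 al1.
set A := al `^ al * (1 - al) `^ (1 - al).
have A0 : 0 < A by rewrite mulr_gt0 ?powR_gt0 // subr_gt0.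
rewrite deviation_payoff_at_best -/A; split=> [no_dev | scale_ge1 y y01].
  rewrite -(ler_pMr _ A0); apply: le_trans (no_dev al _); last by rewrite !ltW.
  have grade_ge : al <= al + Num.max (D - (al - xi) / N) 0.
    by rewrite lerDl le_max lexx orbT.
  have grade0 := le_trans (ltW al0) grade_ge.
  rewrite /deviation_payoff ler_wpM2r ?powR_ge0 //.
  by apply: ge0_ler_powR grade_ge; rewrite ?nnegrE ?(ltW al0).
have [curved | flat] := lerP 0 (D - (y - xi) / N).
  by rewrite -deviation_payoff_at_best; exact: deviation_payoff_curved_le.
rewrite /deviation_payoff (max_r (ltW flat)) addr0.
by apply: le_trans (bernoulli_likelihood_le al01 y01) _; rewrite ler_peMr // ltW.
Qed.

Lemma deviation_threshold_le (m J : R) :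
  J <= N * m / (N - 1) -> phi n m al J = 0 ->
  (deviation_threshold al m J <= N * D) = (1 <= ((N - 1) / N) `^ al * K).
Proof.
move=> Jhi /(phi_eq0E Jhi); set KJ := 1 + _ - J => hKJ.
have KJ0 : 0 < KJ by rewrite /KJ; lra.
rewrite -(ler_pM2l KJ0) mulr1 (mulrA KJ) (mulrC KJ) hKJ mul1r ler_pdivlMr //.
rewrite /deviation_threshold (_ : N * m / (N - 1) - J = KJ - 1); last first.
  by rewrite /KJ; ring.
by apply/idP/idP => ?; have := D0; nra.
Qed.

End Deviation.

Section MaxsMins.
Variable R : realType.

Lemma maxs_le (s : seq R) (v : R) : s != [::] -> (maxs s <= v) = all (<= v) s.
Proof.
have foldr_le h : (foldr Num.max h s <= v) = (h <= v) && all (<= v) s.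
  by elim: s => [|x s IH] /=; rewrite ?andbT // ge_max IH andbCA.
by case: s foldr_le => [//|x s] -> _ /=; rewrite andbA andbb.
Qed.

Lemma mins_le (s : seq R) (x : R) : x \in s -> mins s <= x.
Proof.
have foldr_le h : x \in s -> foldr Num.min h s <= x.
  elim: s => [//|y s IH]; rewrite inE ge_min => /orP[/eqP->|/IH->].
    by rewrite lexx.
  by rewrite orbT.
exact: foldr_le.
Qed.

Lemma mins_mem (s : seq R) : s != [::] -> mins s \in s.
Proof.
have foldr_mem h : foldr Num.min h s \in h :: s.
  elim: s => [|y s IH] /=; first exact: mem_head.
  have [_|_] := lerP y (foldr Num.min h s); first by rewrite !inE eqxx orbT.
  by move: IH; rewrite !in_cons; case/orP=> ->; rewrite ?orbT.
case: s foldr_mem => [//|y s] /(_ y); rewrite /mins /=.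
by case/predU1P=> [-> _|//]; exact: mem_head.
Qed.

Variables (T : finType) (f : T -> R).
Hypothesis T_gt0 : (0 < #|T|)%N.

Let enum_map_neq0 : [seq f i | i <- enum T] != [::].
Proof. by rewrite -size_eq0 size_map -cardE -lt0n. Qed.

Lemma maxs_enum_le (v : R) :
  maxs [seq f i | i <- enum T] <= v <-> forall i, f i <= v.
Proof.
rewrite maxs_le // all_map; split=> [/allP le_v i | le_v].
  by apply: le_v; rewrite mem_enum.
by apply/allP => i _; exact: le_v.
Qed.

Lemma mins_enum :
  exists2 i, mins [seq f i | i <- enum T] = f i & forall j, f i <= f j.
Proof.
have /mapP[i _ minE] := mins_mem enum_map_neq0.
by exists i => // j; rewrite -minE mins_le // map_f ?mem_enum.
Qed.

End MaxsMins.

Section Game.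
Variables (R : realType) (n : nat) (a : 'I_n -> R) (m : R).
Local Notation N := (n%:R : R).

Lemma xbar_upd (x : 'I_n -> R) (i : 'I_n) (y : R) :
  xbar (upd x i y) = xbar x + (y - x i) / N.
Proof.
rewrite /xbar (bigD1 i) //= [in RHS](bigD1 i) //= /upd eqxx.
by rewrite (eq_bigr x) => [|j /negbTE ->]; first ring.
Qed.

Lemma payoffE (x : 'I_n -> R) (i : 'I_n) :
  payoff a m x i = deviation_payoff n (a i) (m - xbar x) (x i) (x i).
Proof. by rewrite /deviation_payoff subrr mul0r subr0. Qed.

Lemma payoff_upd (x : 'I_n -> R) (i : 'I_n) (y : R) :
  payoff a m (upd x i y) i = deviation_payoff n (a i) (m - xbar x) (x i) y.
Proof.
rewrite /payoff /grade /deviation_payoff xbar_upd /upd eqxx.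
by congr (_ `^ _ * _); congr (_ + Num.max _ _); ring.
Qed.

Lemma x_starE (i : 'I_n) :
  x_star a m i = curved_best_response n (a i) (m - xbar_star a m).
Proof. by []. Qed.

Hypotheses (n2 : (2 <= n)%N) (a01 : forall i, 0 < a i < 1).

Let N_ge2 : 2 <= N. Proof. by rewrite (ler_nat R 2 n). Qed.

Lemma sum_inv_gt1 : 1 < \sum_(i < n) (N - a i)^-1.
Proof.
have N0 : 0 < N by have := N_ge2; lra.
have sum_N : \sum_(i < n) N^-1 = 1.
  by rewrite sumr_const card_ord -mulr_natl; field; rewrite gt_eqF.
rewrite -{1}sum_N.
apply: ltr_sum => [|i _].
  by rewrite has_predT /index_enum -enumT size_enum_ord ltnW.
have /andP[a0 a1] := a01 i.
by rewrite ltf_pV2 ?posrE ?subr_gt0 ?gtrDl ?oppr_lt0 //; have := N_ge2; lra.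
Qed.

Lemma xbar_x_star : xbar (x_star a m) = xbar_star a m.
Proof.
have N2 := N_ge2; have S1 := sum_inv_gt1.
set S := \sum_(i < n) _ in S1; set D := m - xbar_star a m.
have x_star_partial_fractions i :
    x_star a m i = - (N - 1) - N * D + (N - 1) * N * (1 + D) * (N - a i)^-1.
  have /andP[a0 a1] := a01 i.
  by rewrite x_starE /curved_best_response -/D; field; rewrite gt_eqF //; lra.
rewrite /xbar (eq_bigr _ (fun i _ => x_star_partial_fractions i)) big_split /= sumr_const card_ord.
rewrite -big_distrr /= -/S -mulr_natl /D /xbar_star /alpha_hat -/S.
by field; rewrite !gt_eqF //; lra.
Qed.

Lemma x_star_no_deviationP (i : 'I_n) (J : R) :
  0 <= m - xbar_star a m -> J <= N * m / (N - 1) -> phi n m (a i) J = 0 ->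
  (forall y, 0 <= y <= 1 ->
     payoff a m (upd (x_star a m) i y) i <= payoff a m (x_star a m) i)
  <-> deviation_threshold n (a i) m J <= N * (m - xbar_star a m).
Proof.
move=> D0 Jhi phi0.
rewrite (deviation_threshold_le n2 (a01 i) D0 Jhi phi0).
rewrite -(no_profitable_deviationP n2 (a01 i) D0) payoffE xbar_x_star.
by split=> no_dev y /no_dev; rewrite payoff_upd xbar_x_star.
Qed.

Lemma x_star_gt0P : 0 <= m - xbar_star a m ->
  (forall i, 0 < x_star a m i) <->
  N * (m - xbar_star a m) <
    (N - 1) * mins [seq a i | i <- enum 'I_n] / (1 - mins [seq a i | i <- enum 'I_n]).
Proof.
have n_gt0 : (0 < #|'I_n|)%N by rewrite card_ord ltnW.
have [j -> min_j] := mins_enum a n_gt0; set D := m - xbar_star a m => D0.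
have /andP[aj0 aj1] := a01 j.
rewrite ltr_pdivlMr ?subr_gt0 //; split=> [x_gt0 | lt_j i].
  by move: (x_gt0 j); rewrite x_starE curved_best_response_gt0.
have /andP[ai0 ai1] := a01 i; have N2 := N_ge2.
rewrite x_starE curved_best_response_gt0 //.
have lhs_le : N * D * (1 - a i) <= N * D * (1 - a j).
  by rewrite ler_wpM2l ?mulr_ge0 ?lerB ?min_j //; lra.
have rhs_le : (N - 1) * a j <= (N - 1) * a i by rewrite ler_wpM2l ?min_j //; lra.
exact: le_lt_trans lhs_le (lt_le_trans lt_j rhs_le).
Qed.

End Game.

Theorem mainTheorem12 (R : realType) (n : nat) (a : 'I_n -> R) (m : R)
  (J : 'I_n -> R) :
  (2 <= n)%N ->
  (forall i, 0 < a i < 1) ->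
  0 < m < 1 ->
  (* J_i is the (unique) zero of phi_i in the stated interval *)
  (forall i, (n%:R * m - a i) / (n%:R - 1) <= J i
             <= n%:R * m / (n%:R - 1) - a i / (n%:R - a i)
           /\ phi n m (a i) (J i) = 0) ->
  curved_interior_pure_NE a m (x_star a m)
  <->
  (maxs [seq (n%:R - a i) * (n%:R * m / (n%:R - 1) - J i) - a i | i <- enum 'I_n]
     <= n%:R * (m - xbar_star a m)
   /\ n%:R * (m - xbar_star a m)
      < (n%:R - 1) * mins [seq a i | i <- enum 'I_n]
        / (1 - mins [seq a i | i <- enum 'I_n])).
Proof.
move=> n2 a01 _ hJ.
have n_gt0 : (0 < #|'I_n|)%N by rewrite card_ord ltnW.
have phiJ i := (hJ i).2.
have Jhi i : J i <= n%:R * m / (n%:R - 1).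
  have [/andP[_ Jhi] _] := hJ i; have /andP[ai0 ai1] := a01 i.
  rewrite (le_trans Jhi) // gerBl divr_ge0 ?subr_ge0 ?ltW // (lt_le_trans ai1) //.
  by rewrite ler1n ltnW.
have no_devP i D0 := x_star_no_deviationP n2 a01 D0 (Jhi i) (phiJ i).
split=> [[[_ NE] [x_gt0 curved]] | [thr_le mu_gt]].
  have D0 : 0 <= m - xbar_star a m by rewrite -xbar_x_star // subr_ge0 ltW.
  split; last exact/x_star_gt0P.
  by apply/maxs_enum_le => // i; apply/no_devP => //; exact: NE.
move/(maxs_enum_le _ n_gt0): thr_le => thr_le.
have i0 : 'I_n := Ordinal (ltnW n2).
have D0 : 0 < m - xbar_star a m.
  move: (thr_le i0).
  move/(lt_le_trans (deviation_threshold_gt0 n2 (a01 i0) (Jhi i0) (phiJ i0))).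
  by rewrite pmulr_rgt0 // ltr0n ltnW.
have x_gt0 := (x_star_gt0P n2 a01 (ltW D0)).2 mu_gt.
split; last by split=> //; rewrite xbar_x_star // -subr_gt0.
split=> i; first by rewrite ltW // x_starE curved_best_response_le1 // ltW.
by apply/(no_devP i (ltW D0)); exact: thr_le.
Qed.
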